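(* Let $\mathcal{L}$ be a linear space of random variables on $\Omega$ containing all constants, and let $P$ be a coherent$_1$ marginal prevision on $\mathcal{L}$. Then $P$ is a finitely additive expectation on $\mathcal{L}$.
   Context: Random variables are real-valued functions on a nonempty set $\Omega$; marginal previsions $P(X)$ are extended real numbers. Coherence$_1$ (marginal case): $\{P(X):X\in\mathcal{L}\}$ is coherent$_1$ if for all finitely many $X_1,\dots,X_n\in\mathcal{L}$, all real $\alpha_1,\dots,\alpha_n$ with $\alpha_j\ge0$ whenever $P(X_j)=+\infty$ and $\alpha_j\le0$ whenever $P(X_j)=-\infty$, and all real $c_1,\dots,c_n$ with $c_j=P(X_j)$ whenever it is finite, $\sup_\omega\sum_{j=1}^n\alpha_j[X_j(\omega)-c_j]\ge0$. A finitely additive expectation on $\mathcal{L}$ is a map $L:\mathcal{L}\to\mathbb{R}\cup\{\pm\infty\}$ that is nonnegative ($X\le Y$ implies $L(X)\le L(Y)$), extended-linear ($L(\alpha X+\beta Y)=\alpha L(X)+\beta L(Y)$ for all real $\alpha,\beta$ whenever the right side is not of the form $\infty-\infty$, with $0\times(\pm\infty)=0$), and satisfies $L(1)=1$. *)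

From mathcomp Require Import all_boot all_order all_algebra.
From mathcomp Require Import all_classical all_reals ereal.
Set Implicit Arguments. Unset Strict Implicit. Unset Printing Implicit Defensive.
Import Order.TTheory GRing.Theory Num.Theory.
Local Open Scope classical_set_scope.
Local Open Scope ring_scope.

Section Defs.
Context {R : realType} {Omega : Type}.

Definition linear_space_with_constants (L : set (Omega -> R)) : Prop :=
  (forall X Y, L X -> L Y -> L (fun w => X w + Y w)) /\
  (forall (a : R) X, L X -> L (fun w => a * X w)) /\
  (forall c : R, L (fun _ => c)).

Definition coherent1 (L : set (Omega -> R)) (P : (Omega -> R) -> \bar R) : Prop :=
  forall (n : nat) (X : 'I_n -> Omega -> R) (alpha c : 'I_n -> R),
    (forall j, L (X j)) ->
    (forall j, P (X j) = +oo%E -> 0 <= alpha j) ->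
    (forall j, P (X j) = -oo%E -> alpha j <= 0) ->
    (forall j, P (X j) \is a fin_num -> P (X j) = (c j)%:E) ->
    (0 <= ereal_sup [set (\sum_(j < n) alpha j * (X j w - c j))%:E | w in [set: Omega]])%E.

Definition fa_expectation (L : set (Omega -> R)) (P : (Omega -> R) -> \bar R) : Prop :=
  (forall X Y, L X -> L Y -> (forall w, X w <= Y w) -> (P X <= P Y)%E) /\
  (* extended linearity, with 0 * (+-oo) = 0 (mathcomp's convention) *)
  (forall (a b : R) X Y, L X -> L Y ->
     ~ (((a%:E * P X)%E = +oo%E /\ (b%:E * P Y)%E = -oo%E) \/
        ((a%:E * P X)%E = -oo%E /\ (b%:E * P Y)%E = +oo%E)) ->
     P (fun w => a * X w + b * Y w) = (a%:E * P X + b%:E * P Y)%E) /\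
  P (fun _ => 1) = 1%E.

End Defs.

From mathcomp Require Import all_boot all_order all_algebra.
From mathcomp Require Import all_classical all_reals ereal.
From mathcomp Require Import lra.
Import Order.TTheory GRing.Theory Num.Theory.
Local Open Scope classical_set_scope.
Local Open Scope ring_scope.

(* Coherence bounds every finite combination: if [\sum_j a j * X j <= k]
   pointwise and no [a j * P (X j)] is -oo, then [\sum_j a j * P (X j) <= k].
   Otherwise real prices [c j], equal to [P (X j)] where it is finite and chosen
   freely where it is infinite, would make [\sum_j a j * (X j - c j)] uniformly
   negative.  Monotonicity, normalisation and the two inequalities that make up
   extended additivity are all instances of this bound. *)

Lemma exists_real_sum_gt {R : realType} {n : nat} {t : 'I_n -> \bar R} {k : R} :
  (forall j, t j != -oo%E) -> (k%:E < \sum_(j < n) t j)%E ->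
  exists r : 'I_n -> R,
    (forall j, t j \is a fin_num -> r j = fine (t j)) /\ k < \sum_(j < n) r j.
Proof.
move=> tNy kt.
have [[j0 tj0]|tNpy] := pselect (exists j, t j = +oo%E).
- pose r j := if j == j0 then k + 1 - \sum_(i < n | i != j0) fine (t i)
              else fine (t j).
  exists r; split=> [j|].
  + by rewrite /r; case: eqP => [->|//]; rewrite tj0.
  + rewrite (bigD1 j0) //= /r eqxx.
    under eq_bigr => j /negbTE -> do [].
    by rewrite subrK ltrDl.
- have tfin j : t j \is a fin_num.
    by rewrite fin_numE tNy; apply/eqP => tjy; apply: tNpy; exists j.
  exists (fun j => fine (t j)); split=> //.
  by rewrite -lte_fin -sumEFin; under eq_bigr do rewrite fineK //.
Qed.

Lemma exists_EFin_mul_eq {R : realType} (a r : R) (p : \bar R) :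
  ((a%:E * p)%E \is a fin_num -> r = fine (a%:E * p)) ->
  exists c : R, a * c = r /\ (p \is a fin_num -> p = c%:E).
Proof.
have [->|a0] := eqVneq a 0.
  rewrite mul0e => /(_ isT) ->; exists (fine p).
  by split=> [|/fineK //]; rewrite mul0r.
case: p => [y||] /= rP.
- by exists y; rewrite rP.
- by exists (r / a); rewrite mulrC divfK.
- by exists (r / a); rewrite mulrC divfK.
Qed.

Lemma mule_neqNy_sign {R : realType} {a : R} {p : \bar R} :
  (a%:E * p)%E != -oo%E -> (p = +oo%E -> 0 <= a) /\ (p = -oo%E -> a <= 0).
Proof.
move=> apNy; split=> p_inf; move: apNy; rewrite p_inf; apply: contraR;
  rewrite -ltNge => a_sgn.
- by rewrite mulry ltr0_sg // mulN1e.
- by rewrite mulrNy gtr0_sg // mul1e.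
Qed.

Lemma adde_eq_of_le_ge {R : realType} (u v z : \bar R) :
  ~ ((u = +oo%E /\ v = -oo%E) \/ (u = -oo%E /\ v = +oo%E)) ->
  (u != -oo%E -> v != -oo%E -> z != +oo%E -> (u + v - z <= 0)%E) ->
  (u != +oo%E -> v != +oo%E -> z != -oo%E -> (- u - v + z <= 0)%E) ->
  z = (u + v)%E.
Proof.
case: u => [x||]; case: v => [y||]; case: z => [t||] uv_def le ge //=;
  try (by exfalso; apply: uv_def; tauto);
  try (by move: (le isT isT isT));
  try (by move: (ge isT isT isT)).
move: (le isT isT isT) (ge isT isT isT); rewrite -!EFinD !lee_fin => ? ?.
by congr (_%:E); lra.
Qed.

Section Coherent1.
Context {R : realType} {Omega : Type}.
Context {L : set (Omega -> R)} {P : (Omega -> R) -> \bar R}.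
Hypothesis P_coherent : coherent1 L P.

Lemma coherent1_sum_le (n : nat) (X : 'I_n -> Omega -> R) (a : 'I_n -> R) (k : R) :
  (forall j, L (X j)) -> (forall w, \sum_(j < n) a j * X j w <= k) ->
  (forall j, (a j)%:E * P (X j) != -oo)%E ->
  (\sum_(j < n) (a j)%:E * P (X j) <= k%:E)%E.
Proof.
move=> LX Xk aPNy; rewrite leNgt; apply/negP.
move=> /(exists_real_sum_gt aPNy) [r [rP kr]].
have /choice [c cP] j :
    exists c, a j * c = r j /\ (P (X j) \is a fin_num -> P (X j) = c%:E).
  exact: exists_EFin_mul_eq (rP j).
have aP j := mule_neqNy_sign (aPNy j).
have := P_coherent n X a c LX (fun j => (aP j).1)
  (fun j => (aP j).2) (fun j => (cP j).2).
apply/negP; rewrite -ltNge.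
apply: (@le_lt_trans _ _ (k - \sum_(j < n) r j)%:E); last by rewrite lte_fin subr_lt0.
apply: ge_ereal_sup => _ [w _ <-]; rewrite lee_fin.
under eq_bigr => j _ do rewrite mulrBr (cP j).1.
by rewrite sumrB lerB.
Qed.

Lemma coherent1_le3 (X1 X2 X3 : Omega -> R) (a1 a2 a3 k : R) :
  L X1 -> L X2 -> L X3 ->
  (forall w, a1 * X1 w + a2 * X2 w + a3 * X3 w <= k) ->
  (a1%:E * P X1)%E != -oo%E -> (a2%:E * P X2)%E != -oo%E ->
  (a3%:E * P X3)%E != -oo%E ->
  (a1%:E * P X1 + a2%:E * P X2 + a3%:E * P X3 <= k%:E)%E.
Proof.
move=> L1 L2 L3 Xk aP1 aP2 aP3.
have := @coherent1_sum_le 3 (nth X1 [:: X1; X2; X3]) (nth 0 [:: a1; a2; a3]) k.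
rewrite !big_ord_recr big_ord0 /= add0e; apply.
- by case=> [[|[|[|]]] ?].
- by move=> w; rewrite !big_ord_recr big_ord0 /= add0r.
- by case=> [[|[|[|]]] ?].
Qed.

Lemma coherent1_le_ub (X : Omega -> R) (k : R) :
  L X -> (forall w, X w <= k) -> (P X <= k%:E)%E.
Proof.
move=> LX Xk; have [->|PXNy] := eqVneq (P X) -oo%E; first exact: leNye.
have := @coherent1_sum_le 1 (fun _ => X) (fun _ => 1) k.
by rewrite big_ord1 mul1e; apply=> // w; rewrite big_ord1 mul1r.
Qed.

Lemma coherent1_ge_lb (X : Omega -> R) (k : R) :
  L X -> (forall w, k <= X w) -> (k%:E <= P X)%E.
Proof.
move=> LX kX; have [->|PXNpy] := eqVneq (P X) +oo%E; first exact: leey.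
have := @coherent1_sum_le 1 (fun _ => X) (fun _ => -1) (- k).
rewrite big_ord1 mulN1e EFinN leeN2; apply=> // [w|_].
- by rewrite big_ord1 mulN1r lerN2.
- by rewrite eqe_oppLR.
Qed.

End Coherent1.

Theorem lemma5p4 (R : realType) (Omega : Type) (w0 : Omega)
  (L : set (Omega -> R)) (P : (Omega -> R) -> \bar R) :
  linear_space_with_constants L ->
  coherent1 L P ->
  fa_expectation L P.
Proof.
move=> [LD [LZ LK]] HC.
have L0 := LK 0.
split; [|split].
- move=> X Y LX LY XY.
  have [->|PXNy] := eqVneq (P X) -oo%E; first exact: leNye.
  have [->|PYNpy] := eqVneq (P Y) +oo%E; first exact: leey.
  have := coherent1_le3 HC _ _ _ 1 (-1) 0 0 LX LY L0.
  rewrite mul1e mulN1e mul0e adde0 sube_le0; apply=> //.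
  + by move=> w; have := XY w; lra.
  + by rewrite eqe_oppLR.
- move=> a b X Y LX LY ab_def.
  have LXY : L (fun w => a * X w + b * Y w) by apply: LD; apply: LZ.
  apply: adde_eq_of_le_ge => // [aP bP PZ | aP bP PZ].
  + have := coherent1_le3 HC _ _ _ a b (-1) 0 LX LY LXY.
    rewrite mulN1e; apply=> //; first by move=> w; lra.
    by rewrite eqe_oppLR.
  + have := coherent1_le3 HC _ _ _ (- a) (- b) 1 0 LX LY LXY.
    rewrite !EFinN !mulNe mul1e; apply=> //; first by move=> w; lra.
    * by rewrite eqe_oppLR.
    * by rewrite eqe_oppLR.
- apply/le_anti/andP; split.
  + exact: coherent1_le_ub HC _ 1 (LK 1) (fun _ => lexx 1).
  + exact: coherent1_ge_lb HC _ 1 (LK 1) (fun _ => lexx 1).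
Qed.
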